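(* Let $K=(\mathbf{k}_1,\dots,\mathbf{k}_6)\in(\mathbb{R}^2)^6$ be a 3-RPR configuration whose base anchor points $\mathbf{k}_1,\mathbf{k}_2,\mathbf{k}_3\in\mathbb{R}^2$ are fixed and whose platform anchor points are $\mathbf{k}_j=\mathbf{R}\mathbf{p}_j+\mathbf{t}$ ($j=4,5,6$) for fixed $\mathbf{p}_4,\mathbf{p}_5,\mathbf{p}_6\in\mathbb{R}^2$ and a pose $(\mathbf{R},\mathbf{t})$ with $\mathbf{R}\in SO(2)$, $\mathbf{t}\in\mathbb{R}^2$. Let $D$ be either $D^{\blacktriangle}_{\vartriangle}$ or $D^{\vartriangle}_{\vartriangle}$. If $K'=(\mathbf{k}'_1,\dots,\mathbf{k}'_6)$ is a closest configuration to $K$ on the collinearity variety $C_B=0$, i.e. a global minimizer of $D(K,K')$ over all $K'\in\mathbb{R}^{12}$ with $C_B(K')=0$, then $\mathbf{k}'_1,\mathbf{k}'_2,\mathbf{k}'_3$ are the pedal points (orthogonal projections) of $\mathbf{k}_1,\mathbf{k}_2,\mathbf{k}_3$ on the line of regression of $\mathbf{k}_1,\mathbf{k}_2,\mathbf{k}_3$. Moreover, the distance $\min\{D(K,K'):C_B(K')=0\}$ depends only on the geometry of the manipulator, i.e. it is independent of the pose $(\mathbf{R},\mathbf{t})$.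
   Context: A configuration is $K'=(\mathbf{k}'_1,\dots,\mathbf{k}'_6)$ with $\mathbf{k}'_i=(c_i,d_i)^T\in\mathbb{R}^2$, viewed as a point of $\mathbb{R}^{12}$. For indices $i,j$ define the segment distance $d(\vert_{ij},\vert'_{ij})^2=\frac13\big[\|\mathbf{k}_i-\mathbf{k}'_i\|^2+\|\mathbf{k}_j-\mathbf{k}'_j\|^2+(\mathbf{k}_i-\mathbf{k}'_i)^T(\mathbf{k}_j-\mathbf{k}'_j)\big]$ and for $\{i,j,k\}$ the triangle distance $d(\blacktriangle_{ijk},\blacktriangle'_{ijk})^2=\frac16\big[\sum_{x=i,j,k}\|\mathbf{k}_x-\mathbf{k}'_x\|^2+(\mathbf{k}_i-\mathbf{k}'_i)^T(\mathbf{k}_k-\mathbf{k}'_k)+(\mathbf{k}_i-\mathbf{k}'_i)^T(\mathbf{k}_j-\mathbf{k}'_j)+(\mathbf{k}_k-\mathbf{k}'_k)^T(\mathbf{k}_j-\mathbf{k}'_j)\big]$. Then $D^{\blacktriangle}_{\vartriangle}(K,K')^2=\frac17\big[\sum_{(i,j)\in I_3}d(\vert_{ij},\vert'_{ij})^2+d(\blacktriangle_{456},\blacktriangle'_{456})^2\big]$ with $I_3=\{(1,4),(2,5),(3,6),(1,2),(2,3),(1,3)\}$, and $D^{\vartriangle}_{\vartriangle}(K,K')^2=\frac19\sum_{(i,j)\in I_4}d(\vert_{ij},\vert'_{ij})^2$ with $I_4=\{(1,2),(2,3),(1,3),(1,4),(2,5),(3,6),(4,5),(5,6),(4,6)\}$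 (distances are the nonnegative square roots). The collinearity polynomial of the base is $C_B(K')=\det\begin{pmatrix}1&1&1\\ c_1&c_2&c_3\\ d_1&d_2&d_3\end{pmatrix}$. The line of regression of three points is the line minimizing the sum of squared orthogonal distances to these points; the pedal point of a point on a line is its orthogonal projection onto that line. *)

From Stdlib Require Import Reals Lra.
Open Scope R_scope.

Definition point : Type := (R * R)%type.

Definition padd (p q : point) : point := (fst p + fst q, snd p + snd q).
Definition psub (p q : point) : point := (fst p - fst q, snd p - snd q).
Definition dot (p q : point) : R := fst p * fst q + snd p * snd q.
Definition nrm2 (p : point) : R := dot p p.

Record config : Type := mkConfig { k1 : point; k2 : point; k3 : point;
                                   k4 : point; k5 : point; k6 : point }.

Definition kpt (K : config) (i : nat) : point :=
  match i with
  | 1%nat => k1 K | 2%nat => k2 K | 3%nat => k3 K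
  | 4%nat => k4 K | 5%nat => k5 K | _ => k6 K
  end.

Definition dv (K K' : config) (i : nat) : point := psub (kpt K i) (kpt K' i).

Definition dseg (K K' : config) (i j : nat) : R :=
  sqrt ((1/3) * (nrm2 (dv K K' i) + nrm2 (dv K K' j) + dot (dv K K' i) (dv K K' j))).

Definition dtri (K K' : config) (i j k : nat) : R :=
  sqrt ((1/6) * (nrm2 (dv K K' i) + nrm2 (dv K K' j) + nrm2 (dv K K' k)
                 + dot (dv K K' i) (dv K K' k) + dot (dv K K' i) (dv K K' j)
                 + dot (dv K K' k) (dv K K' j))).

Definition D_tri_seg (K K' : config) : R :=
  sqrt ((1/7) * ( (dseg K K' 1 4)^2 + (dseg K K' 2 5)^2 + (dseg K K' 3 6)^2
                + (dseg K K' 1 2)^2 + (dseg K K' 2 3)^2 + (dseg K K' 1 3)^2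
                + (dtri K K' 4 5 6)^2 )).

Definition D_seg_seg (K K' : config) : R :=
  sqrt ((1/9) * ( (dseg K K' 1 2)^2 + (dseg K K' 2 3)^2 + (dseg K K' 1 3)^2
                + (dseg K K' 1 4)^2 + (dseg K K' 2 5)^2 + (dseg K K' 3 6)^2
                + (dseg K K' 4 5)^2 + (dseg K K' 5 6)^2 + (dseg K K' 4 6)^2 )).

Inductive dist_kind : Type := TriSeg | SegSeg.

Definition Dist (d : dist_kind) : config -> config -> R :=
  match d with TriSeg => D_tri_seg | SegSeg => D_seg_seg end.

(* collinearity polynomial of the base: det [[1,1,1],[c1,c2,c3],[d1,d2,d3]] *)
Definition C_B (K : config) : R :=
  let '(c1, d1) := k1 K in let '(c2, d2) := k2 K in let '(c3, d3) := k3 K in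
  (c2 * d3 - c3 * d2) - (c1 * d3 - c3 * d1) + (c1 * d2 - c2 * d1).

Definition is_closest (d : dist_kind) (K K' : config) : Prop :=
  C_B K' = 0 /\ forall K'' : config, C_B K'' = 0 -> Dist d K K' <= Dist d K K''.

(* Lines in R^2: { x | dot n x = c } with normal n <> 0. *)
Definition line_dist2 (n : point) (c : R) (p : point) : R :=
  (dot n p - c) ^ 2 / nrm2 n.

Definition pedal (n : point) (c : R) (p : point) : point :=
  let t := (dot n p - c) / nrm2 n in (fst p - t * fst n, snd p - t * snd n).

Definition is_regression_line (a1 a2 a3 : point) (n : point) (c : R) : Prop :=
  n <> (0, 0) /\
  forall (n' : point) (c' : R), n' <> (0, 0) ->
    line_dist2 n c a1 + line_dist2 n c a2 + line_dist2 n c a3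
    <= line_dist2 n' c' a1 + line_dist2 n' c' a2 + line_dist2 n' c' a3.

(* Rotation in SO(2) given by (cs, sn) with cs^2 + sn^2 = 1:
   matrix [[cs, -sn], [sn, cs]]. *)
Definition rot (cs sn : R) (p : point) : point :=
  (cs * fst p - sn * snd p, sn * fst p + cs * snd p).

Definition rpr_config (b1 b2 b3 p4 p5 p6 : point) (cs sn : R) (t : point)
  : config :=
  mkConfig b1 b2 b3 (padd (rot cs sn p4) t) (padd (rot cs sn p5) t)
           (padd (rot cs sn p6) t).

From Stdlib Require Import Reals Lra Psatz.
Open Scope R_scope.

(* D^2 is a positive semidefinite quadratic form in the errors e_i = k_i - k'_i, and
   only e_1, e_2, e_3 are constrained by C_B.  Completing the square in the platform
   errors e_4, e_5, e_6 leaves alpha (|e_1|^2 + |e_2|^2 + |e_3|^2) + beta |e_1 + e_2 + e_3|^2.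
   If k'_1, k'_2, k'_3 lie on a line, then by Pythagoras the first sum is at least the sum
   of squared distances of k_1, k_2, k_3 to that line, which is at least the smallest
   eigenvalue lambda of their scatter matrix, with equality exactly for the pedal points on
   a regression line.  For the regression line through the centroid the pedal residuals
   also sum to zero, so min D^2 = alpha lambda: it involves the base points only, not the
   pose. *)

Lemma nrm2_ge0 (p : point) : 0 <= nrm2 p.
Proof. destruct p as [x y]; unfold nrm2, dot; simpl; nra. Qed.

Lemma nrm2_pos (n : point) : n <> (0, 0) -> 0 < nrm2 n.
Proof.
  destruct n as [u v]; unfold nrm2, dot; simpl; intro Hn.
  destruct (Req_dec u 0), (Req_dec v 0); subst; [now exfalso; apply Hn | nra..].
Qed.

Lemma nrm2_eq0 (p : point) : nrm2 p = 0 -> p = (0, 0).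
Proof. destruct p as [x y]; unfold nrm2, dot; simpl; intro H; f_equal; nra. Qed.

Lemma psub_eq0 (p q : point) : psub p q = (0, 0) -> p = q.
Proof.
  destruct p as [x y], q as [x' y']; unfold psub; simpl; intro H.
  injection H; intros; f_equal; lra.
Qed.

Lemma psub_diag (p : point) : psub p p = (0, 0).
Proof. destruct p; unfold psub; simpl; f_equal; ring. Qed.

Lemma psub_psub_cancel (a s : point) : psub (psub a (psub a s)) s = (0, 0).
Proof. destruct a, s; unfold psub; simpl; f_equal; ring. Qed.

Lemma nrm2_0 : nrm2 (0, 0) = 0.
Proof. unfold nrm2, dot; simpl; ring. Qed.

Lemma dot_psub (n p q : point) : dot n (psub p q) = dot n p - dot n q.
Proof. unfold dot, psub; simpl; ring. Qed.

Definition cross (p q : point) : R := fst p * snd q - snd p * fst q.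
Definition perp (p : point) : point := (- snd p, fst p).

Lemma dot_perp (p q : point) : dot (perp p) q = cross p q.
Proof. unfold dot, perp, cross; simpl; ring. Qed.

Lemma cross_diag (p : point) : cross p p = 0.
Proof. unfold cross; ring. Qed.

Lemma perp_eq0 (p : point) : perp p = (0, 0) -> p = (0, 0).
Proof. destruct p as [x y]; unfold perp; simpl; intro H; injection H; intros; f_equal; lra. Qed.

Lemma cross_eq0 (n p q : point) :
  n <> (0, 0) -> dot n p = 0 -> dot n q = 0 -> cross p q = 0.
Proof.
  intros Hn Hp Hq. pose proof (nrm2_pos n Hn) as N.
  assert (E : cross p q * nrm2 n = dot n p * cross n q - dot n q * cross n p)
    by (unfold cross, nrm2, dot; ring).
  rewrite Hp, Hq, !Rmult_0_l, Rminus_0_r in E.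
  apply Rmult_integral in E as [E | E]; [exact E | lra].
Qed.

Lemma C_B_cross (K : config) : C_B K = cross (psub (k2 K) (k1 K)) (psub (k3 K) (k1 K)).
Proof.
  destruct K as [[x1 y1] [x2 y2] [x3 y3] ? ? ?]; unfold C_B, cross, psub; simpl; ring.
Qed.

Lemma line_through_two (p q : point) :
  exists n c, n <> (0, 0) /\ dot n p = c /\ dot n q = c.
Proof.
  destruct (Req_dec (nrm2 (psub q p)) 0) as [E | E].
  - apply nrm2_eq0, psub_eq0 in E; subst q.
    exists (1, 0), (fst p); unfold dot; simpl.
    split; [intro H; injection H; lra | split; ring].
  - exists (perp (psub q p)), (dot (perp (psub q p)) p).
    split; [intros H; apply perp_eq0 in H; rewrite H, nrm2_0 in E; lra | split; [reflexivity |]].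
    enough (Hq : dot (perp (psub q p)) (psub q p) = 0) by (rewrite dot_psub in Hq; lra).
    now rewrite dot_perp, cross_diag.
Qed.

Lemma line_of_C_B (K : config) : C_B K = 0 ->
  exists n c, n <> (0, 0) /\ dot n (k1 K) = c /\ dot n (k2 K) = c /\ dot n (k3 K) = c.
Proof.
  intro HC. destruct (Req_dec (nrm2 (psub (k2 K) (k1 K))) 0) as [E | E].
  - apply nrm2_eq0, psub_eq0 in E; rewrite E.
    destruct (line_through_two (k1 K) (k3 K)) as [n [c [Hn [H1 H3]]]].
    now exists n, c.
  - set (n := perp (psub (k2 K) (k1 K))).
    exists n, (dot n (k1 K)).
    split; [intros H; apply perp_eq0 in H; rewrite H, nrm2_0 in E; lra |].
    assert (H2 : dot n (psub (k2 K) (k1 K)) = 0) by (unfold n; now rewrite dot_perp, cross_diag).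
    assert (H3 : dot n (psub (k3 K) (k1 K)) = 0) by (unfold n; now rewrite dot_perp, <- C_B_cross).
    rewrite dot_psub in H2, H3. repeat split; lra.
Qed.

Lemma C_B_of_line (K : config) (n : point) (c : R) : n <> (0, 0) ->
  dot n (k1 K) = c -> dot n (k2 K) = c -> dot n (k3 K) = c -> C_B K = 0.
Proof.
  intros Hn H1 H2 H3. rewrite C_B_cross.
  apply (cross_eq0 n); [exact Hn | rewrite dot_psub; lra ..].
Qed.

Lemma dot_pedal (n : point) (c : R) (a : point) : n <> (0, 0) -> dot n (pedal n c a) = c.
Proof.
  intro Hn. pose proof (nrm2_pos n Hn) as N. destruct n as [u v], a as [x y].
  unfold pedal, nrm2, dot in *; simpl in *. field. lra.
Qed.

Lemma pedal_pythagoras (n : point) (c : R) (a p : point) : n <> (0, 0) -> dot n p = c ->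
  nrm2 (psub a p) = line_dist2 n c a + nrm2 (psub (pedal n c a) p).
Proof.
  intros Hn Hp. pose proof (nrm2_pos n Hn) as N. subst c.
  destruct n as [u v], a as [x y], p as [px py].
  unfold line_dist2, pedal, nrm2, psub, dot in *; simpl in *. field. lra.
Qed.

Lemma line_dist2_pedal (n : point) (c : R) (a : point) : n <> (0, 0) ->
  line_dist2 n c a = nrm2 (psub a (pedal n c a)).
Proof.
  intro Hn. rewrite (pedal_pythagoras n c a (pedal n c a) Hn (dot_pedal n c a Hn)).
  rewrite psub_diag, nrm2_0; ring.
Qed.

Definition qform (X Y Z : R) (n : point) : R :=
  X * fst n ^ 2 + 2 * Z * fst n * snd n + Y * snd n ^ 2.

Lemma qform_ge0_singular (X Y Z : R) (n : point) :
  0 <= X -> 0 <= Y -> X * Y = Z ^ 2 -> 0 <= qform X Y Z n.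
Proof.
  intros HX HY HXY. destruct n as [u v]; unfold qform; simpl.
  destruct (Req_dec X 0) as [E | E].
  - subst X. assert (Z = 0) by nra. subst Z. nra.
  - assert (Hsq : X * (X * u ^ 2 + 2 * Z * u * v + Y * v ^ 2)
                  = (X * u + Z * v) ^ 2 + (X * Y - Z ^ 2) * v ^ 2) by ring.
    rewrite HXY, Rminus_diag, Rmult_0_l, Rplus_0_r in Hsq.
    pose proof (pow2_ge_0 (X * u + Z * v)). nra.
Qed.

Lemma qform_root_singular (X Y Z : R) :
  X * Y = Z ^ 2 -> exists n, n <> (0, 0) /\ qform X Y Z n = 0.
Proof.
  intro HXY. unfold qform. destruct (Req_dec X 0) as [E | E].
  - subst X. assert (Z = 0) by nra. subst Z.
    exists (1, 0); simpl; split; [intro H; injection H; lra | ring].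
  - exists (Z, - X); simpl; split; [intro H; injection H; lra | nra].
Qed.

(* The smaller eigenvalue of the symmetric matrix [[X, Z], [Z, Y]]. *)
Definition eig_min (X Y Z : R) : R := (X + Y - sqrt ((X - Y) ^ 2 + 4 * Z ^ 2)) / 2.

Lemma eig_min_spec (X Y Z : R) :
  0 <= X - eig_min X Y Z /\ 0 <= Y - eig_min X Y Z /\
  (X - eig_min X Y Z) * (Y - eig_min X Y Z) = Z ^ 2.
Proof.
  unfold eig_min. set (r := sqrt ((X - Y) ^ 2 + 4 * Z ^ 2)).
  assert (Hr : 0 <= r) by apply sqrt_pos.
  pose proof (pow2_ge_0 Z). pose proof (pow2_ge_0 (X - Y)).
  assert (Hrr : r * r = (X - Y) ^ 2 + 4 * Z ^ 2) by (apply sqrt_sqrt; lra).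
  assert (X - Y <= r /\ Y - X <= r) as [] by (split; nra).
  split; [lra | split; [lra | nra]].
Qed.

Lemma qform_shift (X Y Z l : R) (n : point) :
  qform X Y Z n - l * nrm2 n = qform (X - l) (Y - l) Z n.
Proof. unfold qform, nrm2, dot; ring. Qed.

Lemma qform_ge_eig_min (X Y Z : R) (n : point) : eig_min X Y Z * nrm2 n <= qform X Y Z n.
Proof.
  destruct (eig_min_spec X Y Z) as [HX [HY HXY]].
  pose proof (qform_ge0_singular _ _ _ n HX HY HXY) as Hge.
  rewrite <- qform_shift in Hge. lra.
Qed.

Lemma qform_eig_min_attained (X Y Z : R) :
  exists n, n <> (0, 0) /\ qform X Y Z n = eig_min X Y Z * nrm2 n.
Proof.
  destruct (eig_min_spec X Y Z) as [_ [_ HXY]].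
  destruct (qform_root_singular _ _ _ HXY) as [n [Hn E]].
  exists n; split; [exact Hn |]. rewrite <- qform_shift in E. lra.
Qed.

Section Regression.

Variables a1 a2 a3 : point.

Definition centroid : point :=
  ((fst a1 + fst a2 + fst a3) / 3, (snd a1 + snd a2 + snd a3) / 3).

Definition sxx : R :=
  (fst a1 - fst centroid) ^ 2 + (fst a2 - fst centroid) ^ 2 + (fst a3 - fst centroid) ^ 2.
Definition syy : R :=
  (snd a1 - snd centroid) ^ 2 + (snd a2 - snd centroid) ^ 2 + (snd a3 - snd centroid) ^ 2.
Definition sxy : R :=
  (fst a1 - fst centroid) * (snd a1 - snd centroid)
  + (fst a2 - fst centroid) * (snd a2 - snd centroid)
  + (fst a3 - fst centroid) * (snd a3 - snd centroid).

Definition scatter_min : R := eig_min sxx syy sxy.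

Definition regression_error (n : point) (c : R) : R :=
  line_dist2 n c a1 + line_dist2 n c a2 + line_dist2 n c a3.

Lemma residuals_parallel_axis (n : point) (c : R) :
  (dot n a1 - c) ^ 2 + (dot n a2 - c) ^ 2 + (dot n a3 - c) ^ 2
  = qform sxx syy sxy n + 3 * (dot n centroid - c) ^ 2.
Proof.
  unfold qform, sxx, syy, sxy, centroid, dot; simpl; field.
Qed.

Lemma regression_error_eq (n : point) (c : R) : n <> (0, 0) ->
  regression_error n c * nrm2 n = qform sxx syy sxy n + 3 * (dot n centroid - c) ^ 2.
Proof.
  intro Hn. pose proof (nrm2_pos n Hn).
  rewrite <- residuals_parallel_axis. unfold regression_error, line_dist2. field. lra.
Qed.

Lemma regression_error_ge (n : point) (c : R) : n <> (0, 0) ->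
  scatter_min <= regression_error n c.
Proof.
  intro Hn. apply Rmult_le_reg_r with (nrm2 n); [now apply nrm2_pos |].
  rewrite regression_error_eq by exact Hn.
  pose proof (qform_ge_eig_min sxx syy sxy n). pose proof (pow2_ge_0 (dot n centroid - c)).
  unfold scatter_min. lra.
Qed.

Lemma regression_error_attained :
  exists n, n <> (0, 0) /\ regression_error n (dot n centroid) = scatter_min.
Proof.
  destruct (qform_eig_min_attained sxx syy sxy) as [n [Hn E]].
  exists n; split; [exact Hn |].
  apply Rmult_eq_reg_r with (nrm2 n); [| apply Rgt_not_eq, nrm2_pos, Hn].
  rewrite regression_error_eq, E by exact Hn. unfold scatter_min. ring.
Qed.

Lemma pedal_residuals_sum (n : point) : n <> (0, 0) ->
  padd (psub a1 (pedal n (dot n centroid) a1))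
       (padd (psub a2 (pedal n (dot n centroid) a2)) (psub a3 (pedal n (dot n centroid) a3)))
  = (0, 0).
Proof.
  intro Hn. pose proof (nrm2_pos n Hn) as N.
  destruct n as [u v].
  unfold pedal, centroid, padd, psub, nrm2, dot in *; simpl in *.
  f_equal; field; lra.
Qed.

End Regression.

Definition seg_form (a b : point) : R := (1/3) * (nrm2 a + nrm2 b + dot a b).

Definition tri_form (a b c : point) : R :=
  (1/6) * (nrm2 a + nrm2 b + nrm2 c + dot a c + dot a b + dot c b).

Lemma seg_form_ge0 (a b : point) : 0 <= seg_form a b.
Proof.
  replace (seg_form a b) with ((nrm2 a + nrm2 b + nrm2 (padd a b)) / 6)
    by (unfold seg_form, nrm2, dot, padd; simpl; field).
  pose proof (nrm2_ge0 a); pose proof (nrm2_ge0 b); pose proof (nrm2_ge0 (padd a b)); lra.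
Qed.

Lemma tri_form_ge0 (a b c : point) : 0 <= tri_form a b c.
Proof.
  replace (tri_form a b c) with ((nrm2 a + nrm2 b + nrm2 c + nrm2 (padd a (padd b c))) / 12)
    by (unfold tri_form, nrm2, dot, padd; simpl; field).
  pose proof (nrm2_ge0 a); pose proof (nrm2_ge0 b); pose proof (nrm2_ge0 c);
  pose proof (nrm2_ge0 (padd a (padd b c))); lra.
Qed.

Definition dist_form (d : dist_kind) (e1 e2 e3 e4 e5 e6 : point) : R :=
  match d with
  | TriSeg => (1/7) * (seg_form e1 e4 + seg_form e2 e5 + seg_form e3 e6 + seg_form e1 e2
                       + seg_form e2 e3 + seg_form e1 e3 + tri_form e4 e5 e6)
  | SegSeg => (1/9) * (seg_form e1 e2 + seg_form e2 e3 + seg_form e1 e3 + seg_form e1 e4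
                       + seg_form e2 e5 + seg_form e3 e6 + seg_form e4 e5 + seg_form e5 e6
                       + seg_form e4 e6)
  end.

Lemma dist_form_ge0 (d : dist_kind) (e1 e2 e3 e4 e5 e6 : point) :
  0 <= dist_form d e1 e2 e3 e4 e5 e6.
Proof.
  destruct d; unfold dist_form; apply Rmult_le_pos; try lra;
    repeat apply Rplus_le_le_0_compat; auto using seg_form_ge0, tri_form_ge0.
Qed.

Lemma dist_form_0 (d : dist_kind) :
  dist_form d (0, 0) (0, 0) (0, 0) (0, 0) (0, 0) (0, 0) = 0.
Proof. destruct d; unfold dist_form, seg_form, tri_form, nrm2, dot; simpl; field. Qed.

Definition Dist2 (d : dist_kind) (K K' : config) : R :=
  dist_form d (dv K K' 1) (dv K K' 2) (dv K K' 3) (dv K K' 4) (dv K K' 5) (dv K K' 6).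

Lemma Dist_sqrt_Dist2 (d : dist_kind) (K K' : config) : Dist d K K' = sqrt (Dist2 d K K').
Proof.
  assert (Hseg : forall i j, dseg K K' i j ^ 2 = seg_form (dv K K' i) (dv K K' j))
    by (intros; apply pow2_sqrt, seg_form_ge0).
  assert (Htri : forall i j k, dtri K K' i j k ^ 2 = tri_form (dv K K' i) (dv K K' j) (dv K K' k))
    by (intros; apply pow2_sqrt, tri_form_ge0).
  destruct d; unfold Dist, D_tri_seg, D_seg_seg, Dist2, dist_form; now rewrite ?Hseg, ?Htri.
Qed.

Definition scale (k : R) (p : point) : point := (k * fst p, k * snd p).

(* Completing the square in the platform errors e4, e5, e6: the platform part of
   [dist_form] is minimal, and equal to 0, when each e_j is [platform_shift] of
   the adjacent base error and the two others; [alpha] and [beta] are the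
   coefficients of the remaining Schur complement in e1, e2, e3. *)
Definition platform_shift (d : dist_kind) (a b c : point) : point :=
  match d with
  | TriSeg => padd (scale (-7/20) a) (scale (1/20) (padd b c))
  | SegSeg => padd (scale (-7/40) a) (scale (1/40) (padd b c))
  end.

Definition alpha (d : dist_kind) : R := match d with TriSeg => 23/210 | SegSeg => 4/45 end.
Definition beta (d : dist_kind) : R := match d with TriSeg => 1/40 | SegSeg => 41/2160 end.

Lemma alpha_pos (d : dist_kind) : 0 < alpha d.
Proof. destruct d; simpl; lra. Qed.

Lemma beta_ge0 (d : dist_kind) : 0 <= beta d.
Proof. destruct d; simpl; lra. Qed.

Lemma dist_form_decomp (d : dist_kind) (e1 e2 e3 e4 e5 e6 : point) :
  dist_form d e1 e2 e3 e4 e5 e6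
  = alpha d * (nrm2 e1 + nrm2 e2 + nrm2 e3) + beta d * nrm2 (padd e1 (padd e2 e3))
    + dist_form d (0, 0) (0, 0) (0, 0) (psub e4 (platform_shift d e1 e2 e3))
        (psub e5 (platform_shift d e2 e1 e3)) (psub e6 (platform_shift d e3 e1 e2)).
Proof.
  destruct d; unfold dist_form, seg_form, tri_form, platform_shift, alpha, beta,
    scale, nrm2, dot, padd, psub; simpl; field.
Qed.

Definition base_error (K K' : config) : R :=
  nrm2 (dv K K' 1) + nrm2 (dv K K' 2) + nrm2 (dv K K' 3).

Lemma Dist2_ge_base_error (d : dist_kind) (K K' : config) :
  alpha d * base_error K K' <= Dist2 d K K'.
Proof.
  unfold Dist2, base_error. rewrite dist_form_decomp.
  pose proof (beta_ge0 d).
  pose proof (nrm2_ge0 (padd (dv K K' 1) (padd (dv K K' 2) (dv K K' 3)))).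
  match goal with |- context [dist_form d ?z ?z ?z ?f4 ?f5 ?f6] =>
    pose proof (dist_form_ge0 d z z z f4 f5 f6) end.
  nra.
Qed.

Lemma base_error_line (K K' : config) (n : point) (c : R) : n <> (0, 0) ->
  dot n (k1 K') = c -> dot n (k2 K') = c -> dot n (k3 K') = c ->
  base_error K K'
  = regression_error (k1 K) (k2 K) (k3 K) n c
    + nrm2 (psub (pedal n c (k1 K)) (k1 K')) + nrm2 (psub (pedal n c (k2 K)) (k2 K'))
    + nrm2 (psub (pedal n c (k3 K)) (k3 K')).
Proof.
  intros Hn H1 H2 H3. unfold base_error, regression_error, dv; cbn [kpt].
  rewrite (pedal_pythagoras n c (k1 K) (k1 K')), (pedal_pythagoras n c (k2 K) (k2 K')),
    (pedal_pythagoras n c (k3 K) (k3 K')) by assumption.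
  ring.
Qed.

Lemma base_error_ge (K K' : config) : C_B K' = 0 ->
  scatter_min (k1 K) (k2 K) (k3 K) <= base_error K K'.
Proof.
  intro HC. destruct (line_of_C_B K' HC) as [n [c [Hn [H1 [H2 H3]]]]].
  rewrite (base_error_line K K' n c) by assumption.
  pose proof (regression_error_ge (k1 K) (k2 K) (k3 K) n c Hn).
  pose proof (nrm2_ge0 (psub (pedal n c (k1 K)) (k1 K'))).
  pose proof (nrm2_ge0 (psub (pedal n c (k2 K)) (k2 K'))).
  pose proof (nrm2_ge0 (psub (pedal n c (k3 K)) (k3 K'))).
  lra.
Qed.

Lemma Dist2_ge (d : dist_kind) (K K' : config) : C_B K' = 0 ->
  alpha d * scatter_min (k1 K) (k2 K) (k3 K) <= Dist2 d K K'.
Proof.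
  intro HC. eapply Rle_trans; [| apply Dist2_ge_base_error].
  apply Rmult_le_compat_l; [apply Rlt_le, alpha_pos | now apply base_error_ge].
Qed.

Lemma Dist2_attained (d : dist_kind) (K : config) :
  exists K', C_B K' = 0 /\ Dist2 d K K' = alpha d * scatter_min (k1 K) (k2 K) (k3 K).
Proof.
  destruct (regression_error_attained (k1 K) (k2 K) (k3 K)) as [n [Hn Hmin]].
  set (c := dot n (centroid (k1 K) (k2 K) (k3 K))) in *.
  set (e1 := psub (k1 K) (pedal n c (k1 K))).
  set (e2 := psub (k2 K) (pedal n c (k2 K))).
  set (e3 := psub (k3 K) (pedal n c (k3 K))).
  exists (mkConfig (pedal n c (k1 K)) (pedal n c (k2 K)) (pedal n c (k3 K))
            (psub (k4 K) (platform_shift d e1 e2 e3)) (psub (k5 K) (platform_shift d e2 e1 e3))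
            (psub (k6 K) (platform_shift d e3 e1 e2))).
  split.
  - apply (C_B_of_line _ n c Hn); apply dot_pedal, Hn.
  - unfold Dist2, dv; cbn [kpt k1 k2 k3 k4 k5 k6]; fold e1 e2 e3.
    rewrite dist_form_decomp, !psub_psub_cancel, dist_form_0.
    unfold e1, e2, e3, c; rewrite pedal_residuals_sum, nrm2_0 by exact Hn.
    rewrite <- !line_dist2_pedal by exact Hn. fold c; rewrite <- Hmin.
    unfold regression_error; ring.
Qed.

Lemma Dist2_min_pedal (d : dist_kind) (K K' : config) : C_B K' = 0 ->
  Dist2 d K K' <= alpha d * scatter_min (k1 K) (k2 K) (k3 K) ->
  exists n c, is_regression_line (k1 K) (k2 K) (k3 K) n c /\
    k1 K' = pedal n c (k1 K) /\ k2 K' = pedal n c (k2 K) /\ k3 K' = pedal n c (k3 K).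
Proof.
  intros HC Hle.
  assert (Hbase : base_error K K' <= scatter_min (k1 K) (k2 K) (k3 K)).
  { apply Rmult_le_reg_l with (alpha d); [apply alpha_pos |].
    eapply Rle_trans; [apply Dist2_ge_base_error | exact Hle]. }
  destruct (line_of_C_B K' HC) as [n [c [Hn [H1 [H2 H3]]]]].
  rewrite (base_error_line K K' n c) in Hbase by assumption.
  pose proof (nrm2_ge0 (psub (pedal n c (k1 K)) (k1 K'))).
  pose proof (nrm2_ge0 (psub (pedal n c (k2 K)) (k2 K'))).
  pose proof (nrm2_ge0 (psub (pedal n c (k3 K)) (k3 K'))).
  pose proof (regression_error_ge (k1 K) (k2 K) (k3 K) n c Hn).
  assert (Hpedal : forall a p, nrm2 (psub a p) = 0 -> p = a)
    by (intros a p E; symmetry; now apply psub_eq0, nrm2_eq0).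
  exists n, c; split; [split; [exact Hn |] | split; [| split]].
  - intros n' c' Hn'. pose proof (regression_error_ge (k1 K) (k2 K) (k3 K) n' c' Hn').
    unfold regression_error in *. lra.
  - apply Hpedal; lra.
  - apply Hpedal; lra.
  - apply Hpedal; lra.
Qed.

Lemma is_closest_iff (d : dist_kind) (K K' : config) :
  is_closest d K K' <-> C_B K' = 0 /\ Dist2 d K K' = alpha d * scatter_min (k1 K) (k2 K) (k3 K).
Proof.
  destruct (Dist2_attained d K) as [K0 [HC0 HK0]].
  split.
  - intros [HC Hmin]. split; [exact HC |].
    apply Rle_antisym; [| now apply Dist2_ge].
    specialize (Hmin K0 HC0). rewrite !Dist_sqrt_Dist2, HK0 in Hmin.
    apply sqrt_le_0 in Hmin; [exact Hmin | unfold Dist2; apply dist_form_ge0 |].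
    rewrite <- HK0; unfold Dist2; apply dist_form_ge0.
  - intros [HC HK']. split; [exact HC |].
    intros K'' HC''. rewrite !Dist_sqrt_Dist2, HK'.
    now apply sqrt_le_1_alt, Dist2_ge.
Qed.

Theorem theorem2 :
  forall (d : dist_kind) (b1 b2 b3 p4 p5 p6 : point),
    (* pedal-point characterization of closest configurations *)
    (forall (cs sn : R) (t : point) (K' : config),
       cs ^ 2 + sn ^ 2 = 1 ->
       is_closest d (rpr_config b1 b2 b3 p4 p5 p6 cs sn t) K' ->
       exists (n : point) (c : R),
         is_regression_line b1 b2 b3 n c /\
         k1 K' = pedal n c b1 /\ k2 K' = pedal n c b2 /\ k3 K' = pedal n c b3)
    /\
    (* the minimum exists and its value is independent of the pose *)
    (forall (cs sn : R) (t : point),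
       cs ^ 2 + sn ^ 2 = 1 ->
       exists K', is_closest d (rpr_config b1 b2 b3 p4 p5 p6 cs sn t) K')
    /\
    (forall (cs sn cs' sn' : R) (t t' : point) (K' K'' : config),
       cs ^ 2 + sn ^ 2 = 1 -> cs' ^ 2 + sn' ^ 2 = 1 ->
       is_closest d (rpr_config b1 b2 b3 p4 p5 p6 cs sn t) K' ->
       is_closest d (rpr_config b1 b2 b3 p4 p5 p6 cs' sn' t') K'' ->
       Dist d (rpr_config b1 b2 b3 p4 p5 p6 cs sn t) K'
       = Dist d (rpr_config b1 b2 b3 p4 p5 p6 cs' sn' t') K'').
Proof.
  intros d b1 b2 b3 p4 p5 p6. split; [| split].
  - intros cs sn t K' _ HK'. apply is_closest_iff in HK' as [HC HD].
    apply (Dist2_min_pedal d (rpr_config b1 b2 b3 p4 p5 p6 cs sn t) K' HC).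
    now rewrite HD.
  - intros cs sn t _.
    destruct (Dist2_attained d (rpr_config b1 b2 b3 p4 p5 p6 cs sn t)) as [K' HK'].
    exists K'. now apply is_closest_iff.
  - intros cs sn cs' sn' t t' K' K'' _ _ HK' HK''.
    apply is_closest_iff in HK' as [_ HD'], HK'' as [_ HD''].
    now rewrite !Dist_sqrt_Dist2, HD', HD''.
Qed.
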